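(* Let $\kappa,\gamma,\tau,\theta,f,s$ be strictly positive real constants, let $A = 2e^{-\gamma\tau}$, and let $\beta(Q) = f\,\dfrac{\theta^{s}}{\theta^{s}+Q^{s}}$ for $Q \ge 0$. Consider the delay differential equation $$Q'(t) = -\bigl(\kappa+\beta(Q(t))\bigr)Q(t) + A\,\beta(Q(t-\tau))\,Q(t-\tau).$$ If $Q(t)=\varphi(t)$ for $t\in[-\tau,0]$, where $\varphi\in C([-\tau,0],[0,\infty))$ (i.e. $\varphi$ is continuous and non-negative on $[-\tau,0]$), then this equation has a unique solution $Q(t)$ defined for all $t\ge 0$, and there exists some $M<\infty$ such that $Q(t)\in[0,M]$ for all $t\ge 0$.
   Context: This is the Burns–Tannock/Mackey model for the concentration $Q(t)$ of hematopoietic stem cells in the resting phase: $\kappa$ is the differentiation rate, $\gamma$ the apoptosis rate during proliferation, $\tau$ the cell-cycle duration (constant delay), $\beta$ the rate of entry into the cell cycle (a Hill function with maximal rate $f$, half-effect concentration $\theta$ and Hill coefficient $s$), and $A=2e^{-\gamma\tau}$ the amplification factor. A solution with initial history $\varphi$ means a continuous function $Q$ on $[-\tau,\infty)$ equal to $\varphi$ on $[-\tau,0]$ and satisfying the differential equation for $t>0$. *)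

From Stdlib Require Import Reals.
From Coquelicot Require Import Coquelicot.
Open Scope R_scope.

(* Q^s for the Hill function.  The paper only uses Q >= 0; there
   Q^s = Rpower Q s for Q > 0 and 0^s = 0 (s > 0).  For Q < 0 we use 0. *)
Definition hpow (Q s : R) : R := if Rle_dec Q 0 then 0 else Rpower Q s.

Definition beta (f theta s Q : R) : R :=
  f * Rpower theta s / (Rpower theta s + hpow Q s).

Definition amp (gamma tau : R) : R := 2 * exp (- gamma * tau).

(* right-hand side of the delay equation, given Q(t) = x and Q(t - tau) = y *)
Definition rhs (kappa gamma tau theta f s x y : R) : R :=
  - (kappa + beta f theta s x) * x + amp gamma tau * beta f theta s y * y.

Definition cont_within (D : R -> Prop) (g : R -> R) (t : R) : Prop :=
  filterlim g (within D (locally t)) (locally (g t)).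

Definition is_solution (kappa gamma tau theta f s : R) (phi Q : R -> R) : Prop :=
  (forall t, - tau <= t -> cont_within (fun x => - tau <= x) Q t) /\
  (forall t, - tau <= t <= 0 -> Q t = phi t) /\
  (forall t, 0 < t ->
     derivable_pt_lim Q t (rhs kappa gamma tau theta f s (Q t) (Q (t - tau)))).

From Stdlib Require Import Reals Lra Psatz.
From Coquelicot Require Import Coquelicot.
Open Scope R_scope.

(* The Hill flux [x * beta x] equals [f * x] for [x <= 0] and has derivative
   bounded by [f * (1 + |1 - s|)] on (0, oo), so it is globally Lipschitz, and
   so is the right-hand side in (Q(t), Q(t - tau)).  Existence then follows by
   Picard iteration on the integral equation, with the history extended as a
   constant beyond [-tau, 0]: for the norm weighted by exp (- 4 L t) the Picard
   map halves distances.  Uniqueness, non-negativity and boundedness all follow,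
   interval [n tau, (n+1) tau] after interval, from one comparison principle:
   if h' >= - c h then h exp (c t) is nondecreasing.  For the bound, beta x -> 0
   as x -> oo gives a level M >= max phi with A beta(x) x <= kappa M on [0, M],
   and the principle is applied to M - Q. *)

Definition lipschitz2 (F : R -> R -> R) (L : R) : Prop :=
  forall x y x' y', Rabs (F x y - F x' y') <= L * (Rabs (x - x') + Rabs (y - y')).

Lemma exp_le_mono x y : x <= y -> exp x <= exp y.
Proof. intros [H | ->]; [left; apply exp_increasing, H | lra]. Qed.

Lemma Rabs_Rmax_Rmax_le a b c : Rabs (Rmax c a - Rmax c b) <= Rabs (a - b).
Proof. unfold Rmax. destruct (Rle_dec c a), (Rle_dec c b); split_Rabs; lra. Qed.

Lemma Rabs_Rmin_Rmin_le a b c : Rabs (Rmin a c - Rmin b c) <= Rabs (a - b).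
Proof. unfold Rmin. destruct (Rle_dec a c), (Rle_dec b c); split_Rabs; lra. Qed.

Lemma continuity_pt_lipschitz (h : R -> R) K t :
  (forall x y, Rabs (h x - h y) <= K * Rabs (x - y)) -> continuity_pt h t.
Proof.
  intros Hh. unfold continuity_pt, continue_in, limit1_in, limit_in; simpl; unfold R_dist.
  intros eps Heps.
  assert (HK : 0 < Rabs K + 1) by (pose proof (Rabs_pos K); lra).
  exists (eps / (Rabs K + 1)). split; [apply Rdiv_lt_0_compat; lra |].
  intros x [_ Hx].
  apply Rle_lt_trans with ((Rabs K + 1) * Rabs (x - t)).
  - eapply Rle_trans; [apply Hh |].
    apply Rmult_le_compat_r; [apply Rabs_pos | pose proof (Rle_abs K); lra].
  - replace eps with ((Rabs K + 1) * (eps / (Rabs K + 1))) by (field; lra).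
    apply Rmult_lt_compat_l; lra.
Qed.

Lemma continuity_pt_lipschitz2 (F : R -> R -> R) L (a b : R -> R) t :
  0 < L -> lipschitz2 F L -> continuity_pt a t -> continuity_pt b t ->
  continuity_pt (fun u => F (a u) (b u)) t.
Proof.
  intros HL HF Ha Hb.
  unfold continuity_pt, continue_in, limit1_in, limit_in in *; simpl in *; unfold R_dist in *.
  intros eps Heps.
  destruct (Ha (eps / (2 * L))) as [da [Hda Ha']]; [apply Rdiv_lt_0_compat; lra |].
  destruct (Hb (eps / (2 * L))) as [db [Hdb Hb']]; [apply Rdiv_lt_0_compat; lra |].
  exists (Rmin da db). split; [apply Rmin_pos; auto |].
  intros x [Hx Hxt].
  specialize (Ha' x (conj Hx (Rlt_le_trans _ _ _ Hxt (Rmin_l _ _)))).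
  specialize (Hb' x (conj Hx (Rlt_le_trans _ _ _ Hxt (Rmin_r _ _)))).
  eapply Rle_lt_trans; [apply HF |].
  replace eps with (L * (eps / (2 * L) + eps / (2 * L))) by (field; lra).
  apply Rmult_lt_compat_l; lra.
Qed.

Lemma continuity_pt_scal_exp K k u : continuity_pt (fun u => K * exp (k * u)) u.
Proof.
  apply continuity_pt_filterlim, (ex_derive_continuous (fun u => K * exp (k * u))).
  auto_derive. auto.
Qed.

Lemma ex_RInt_continuity (h : R -> R) a b : (forall u, continuity_pt h u) -> ex_RInt h a b.
Proof.
  intros H. apply (ex_RInt_continuous (V := R_CompleteNormedModule)).
  intros z _. apply continuity_pt_filterlim, H.
Qed.

Lemma abs_RInt_le_RInt (h g : R -> R) a b : a <= b ->
  (forall u, continuity_pt h u) -> (forall u, continuity_pt g u) ->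
  (forall u, a <= u <= b -> Rabs (h u) <= g u) -> Rabs (RInt h a b) <= RInt g a b.
Proof.
  intros Hab Hh Hg Hle.
  eapply Rle_trans; [apply abs_RInt_le; [lra | apply ex_RInt_continuity, Hh] |].
  apply RInt_le; [lra | | apply ex_RInt_continuity, Hg | intros; apply Hle; lra].
  apply ex_RInt_continuity. intros u.
  apply (continuity_pt_comp h Rabs); [apply Hh | apply Rcontinuity_abs].
Qed.

Lemma RInt_minus_continuity (h1 h2 : R -> R) a b :
  (forall u, continuity_pt h1 u) -> (forall u, continuity_pt h2 u) ->
  RInt (fun u => h1 u - h2 u) a b = RInt h1 a b - RInt h2 a b.
Proof.
  intros H1 H2.
  apply (RInt_minus (V := R_CompleteNormedModule)); apply ex_RInt_continuity; auto.
Qed.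

Lemma RInt_scal_exp K k t : 0 < k ->
  RInt (fun u => K * exp (k * u)) 0 t = K / k * (exp (k * t) - 1).
Proof.
  intros Hk. apply is_RInt_unique.
  replace (K / k * (exp (k * t) - 1))
    with (minus (K / k * exp (k * t)) (K / k * exp (k * 0)))
    by (rewrite Rmult_0_r, exp_0; unfold minus, plus, opp; simpl; ring).
  apply (is_RInt_derive (fun u => K / k * exp (k * u))).
  - intros u _. auto_derive; [auto | field; lra].
  - intros u _. apply continuity_pt_filterlim, continuity_pt_scal_exp.
Qed.

Lemma is_derive_RInt_0 (h : R -> R) t :
  (forall u, continuity_pt h u) -> is_derive (fun b => RInt h 0 b) t (h t).
Proof.
  intros H. apply (is_derive_RInt (V := R_CompleteNormedModule) h _ 0).
  - apply filter_forall. intros b.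
    apply (RInt_correct (V := R_CompleteNormedModule)), ex_RInt_continuity, H.
  - apply continuity_pt_filterlim, H.
Qed.

Lemma is_lim_seq_div_pow2 K : is_lim_seq (fun n => K / 2 ^ n) 0.
Proof.
  apply is_lim_seq_ext with (fun n => K * (/ 2) ^ n); [intros n; rewrite pow_inv; reflexivity |].
  replace (Finite 0) with (Rbar_mult K 0) by (simpl; f_equal; ring).
  apply is_lim_seq_scal_l, is_lim_seq_geom. rewrite Rabs_pos_eq; lra.
Qed.

Lemma is_lim_seq_of_pow2_bound (u : nat -> R) (l K : R) :
  (forall n, Rabs (u n - l) <= K / 2 ^ n) -> is_lim_seq u l.
Proof.
  intros H. apply is_lim_seq_spec. intros eps.
  destruct (proj2 (is_lim_seq_spec _ _) (is_lim_seq_div_pow2 K) eps) as [N HN].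
  exists N. intros n Hn. specialize (HN n Hn). simpl in HN. rewrite Rminus_0_r in HN.
  pose proof (Rle_abs (K / 2 ^ n)). pose proof (H n). lra.
Qed.

Lemma abs_lim_sub_le (u : nat -> R) (l x B : R) N : is_lim_seq u l ->
  (forall m, (N <= m)%nat -> Rabs (u m - x) <= B) -> Rabs (l - x) <= B.
Proof.
  intros Hu Hb.
  assert (Hl : is_lim_seq (fun m => Rabs (u m - x)) (Rabs (l - x))).
  { apply (is_lim_seq_abs (fun m => u m - x) (l - x)).
    apply (is_lim_seq_minus' _ _ _ _ Hu (is_lim_seq_const x)). }
  apply (is_lim_seq_le_loc _ (fun _ => B) _ _ (ex_intro _ N Hb) Hl (is_lim_seq_const B)).
Qed.

Lemma nondecreasing_of_derive_nonneg (k dk : R -> R) a b : a <= b ->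
  continuity_pt k a -> continuity_pt k b ->
  (forall u, a < u < b -> derivable_pt_lim k u (dk u) /\ 0 <= dk u) -> k a <= k b.
Proof.
  intros Hab Ha Hb Hd.
  (* [Rmax 0 dk] agrees with [dk] inside and is nonnegative at the endpoints,
     where [MVT_gen] may place its point. *)
  assert (Hmvt := MVT_gen k a b (fun u => Rmax 0 (dk u))). cbv zeta in Hmvt.
  rewrite (Rmin_left a b), (Rmax_right a b) in Hmvt by lra.
  destruct Hmvt as [c [_ Hc]].
  - intros u Hu. apply is_derive_Reals. rewrite Rmax_right by (apply Hd; lra). apply Hd; lra.
  - intros u Hu.
    destruct (Req_dec u a) as [-> | Hua]; [exact Ha |].
    destruct (Req_dec u b) as [-> | Hub]; [exact Hb |].
    apply derivable_continuous_pt. exists (dk u). apply Hd; lra.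
  - pose proof (Rmax_l 0 (dk c)). nra.
Qed.

Lemma nonneg_of_derive_ge_linear (h dh : R -> R) c a b : a <= b ->
  continuity_pt h a -> continuity_pt h b ->
  (forall u, a < u < b -> derivable_pt_lim h u (dh u) /\ - c * h u <= dh u) ->
  0 <= h a -> 0 <= h b.
Proof.
  intros Hab Ha Hb Hd H0.
  assert (Hexp : forall u, derivable_pt_lim (fun u => exp (c * u)) u (c * exp (c * u)))
    by (intros u; apply is_derive_Reals; auto_derive; [auto | ring]).
  assert (Hcont : forall u, continuity_pt h u -> continuity_pt (fun u => h u * exp (c * u)) u).
  { intros u Hu. apply continuity_pt_mult; [exact Hu |].
    apply derivable_continuous_pt. eexists. apply Hexp. }
  assert (Hk : h a * exp (c * a) <= h b * exp (c * b)).
  { apply (nondecreasing_of_derive_nonneg (fun u => h u * exp (c * u))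
      (fun u => dh u * exp (c * u) + h u * (c * exp (c * u)))); auto.
    intros u Hu. destruct (Hd u Hu) as [Hdu Hle]. split.
    - apply (derivable_pt_lim_mult h (fun u => exp (c * u))); auto.
    - pose proof (exp_pos (c * u)). nra. }
  pose proof (exp_pos (c * a)). pose proof (exp_pos (c * b)). nra.
Qed.

Lemma steps_ind tau (P : R -> Prop) : 0 < tau ->
  (forall t, - tau <= t <= 0 -> P t) ->
  (forall n : nat, (forall t, - tau <= t <= INR n * tau -> P t) ->
     forall t, INR n * tau < t <= INR (S n) * tau -> P t) ->
  forall t, - tau <= t -> P t.
Proof.
  intros Htau H0 HS.
  assert (Hn : forall n : nat, forall t, - tau <= t <= INR n * tau -> P t).
  { induction n as [|n IH]; intros t Ht.
    - apply H0. simpl in Ht. lra.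
    - destruct (Rle_dec t (INR n * tau)); [apply IH; lra | apply (HS n IH); lra]. }
  intros t Ht. destruct (INR_unbounded (t / tau)) as [n Htn].
  apply (Hn n). split; [exact Ht |].
  apply Rmult_lt_compat_r with (r := tau) in Htn; [| exact Htau].
  unfold Rdiv in Htn. rewrite Rmult_assoc, Rinv_l, Rmult_1_r in Htn; lra.
Qed.

Lemma nonneg_by_steps (h dh : R -> R) c tau : 0 < tau ->
  (forall t, - tau < t -> continuity_pt h t) ->
  (forall t, 0 < t -> derivable_pt_lim h t (dh t)) ->
  (forall t, 0 < t -> 0 <= h (t - tau) -> - c * h t <= dh t) ->
  (forall t, - tau <= t <= 0 -> 0 <= h t) ->
  forall t, - tau <= t -> 0 <= h t.
Proof.
  intros Htau Hc Hd Hlin H0. apply steps_ind; [exact Htau | exact H0 |].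
  intros n IH t Ht. rewrite S_INR in Ht.
  assert (Hn : 0 <= INR n * tau) by (apply Rmult_le_pos; [apply pos_INR | lra]).
  apply (nonneg_of_derive_ge_linear h dh c (INR n * tau));
    [lra | apply Hc; lra | apply Hc; lra | | apply IH; lra].
  intros u Hu. split; [apply Hd; lra |]. apply Hlin; [lra |]. apply IH; lra.
Qed.

Definition dde_solution (F : R -> R -> R) (tau : R) (Q : R -> R) : Prop :=
  (forall t, - tau < t -> continuity_pt Q t) /\
  (forall t, 0 < t -> derivable_pt_lim Q t (F (Q t) (Q (t - tau)))).

Lemma dde_solution_unique F L tau Q1 Q2 : 0 < tau -> lipschitz2 F L ->
  dde_solution F tau Q1 -> dde_solution F tau Q2 ->
  (forall t, - tau <= t <= 0 -> Q1 t = Q2 t) ->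
  forall t, - tau <= t -> Q1 t = Q2 t.
Proof.
  intros Htau HF [C1 D1] [C2 D2] H0.
  set (d := fun u => Q1 u - Q2 u).
  set (dd := fun u => F (Q1 u) (Q1 (u - tau)) - F (Q2 u) (Q2 (u - tau))).
  assert (Hsq : forall t, - tau <= t -> 0 <= - (d t * d t)).
  { apply (nonneg_by_steps _ (fun u => - (dd u * d u + d u * dd u)) (- 2 * L) tau Htau).
    - intros t Ht. apply continuity_pt_opp, continuity_pt_mult;
        apply continuity_pt_minus; auto.
    - intros t Ht. apply (derivable_pt_lim_opp (fun u => d u * d u)).
      apply (derivable_pt_lim_mult d d); apply (derivable_pt_lim_minus Q1 Q2); auto.
    - intros t _ Hdel. unfold d, dd in *.
      replace (Q1 (t - tau)) with (Q2 (t - tau)) by nra.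
      assert (Hlip : Rabs (F (Q1 t) (Q2 (t - tau)) - F (Q2 t) (Q2 (t - tau)))
                     <= L * Rabs (Q1 t - Q2 t)).
      { rewrite <- (Rplus_0_r (Rabs (Q1 t - Q2 t))), <- Rabs_R0, <- (Rminus_diag (Q2 (t - tau))).
        apply HF. }
      generalize dependent (F (Q1 t) (Q2 (t - tau)) - F (Q2 t) (Q2 (t - tau))).
      generalize (Q1 t - Q2 t). intros e x Hx.
      assert (Hprod := Rle_abs (e * x)). rewrite Rabs_mult in Hprod.
      assert (Habs : Rabs e * Rabs e = e * e)
        by (rewrite <- Rabs_mult; apply Rabs_pos_eq, Rle_0_sqr).
      assert (Rabs e * Rabs x <= L * (e * e)) by (rewrite <- Habs; pose proof (Rabs_pos e); nra).
      lra.
    - intros t Ht. unfold d. rewrite H0 by exact Ht. lra. }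
  intros t Ht. specialize (Hsq t Ht). unfold d in Hsq. nra.
Qed.

Section Picard.

Variables (F : R -> R -> R) (L tau Phi : R) (pe : R -> R).
Hypotheses (L_pos : 0 < L) (tau_ge0 : 0 <= tau) (F_lip : lipschitz2 F L)
  (pe_cont : forall t, continuity_pt pe t) (pe_bound : forall t, Rabs (pe t) <= Phi)
  (pe_const : forall t, 0 <= t -> pe t = pe 0).

Definition delayed (x : R -> R) (u : R) : R := F (x u) (x (u - tau)).

Fixpoint picard (n : nat) : R -> R :=
  match n with
  | O => pe
  | S m => fun t => pe t + RInt (delayed (picard m)) 0 (Rmax 0 t)
  end.

Lemma delayed_continuity x :
  (forall t, continuity_pt x t) -> forall u, continuity_pt (delayed x) u.
Proof.
  intros Hx u. apply (continuity_pt_lipschitz2 F L); auto.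
  apply (continuity_pt_comp (fun u => u - tau) x); [| apply Hx].
  apply continuity_pt_minus; [apply continuity_pt_id | apply continuity_pt_const; intros ??; auto].
Qed.

Lemma picard_continuity n t : continuity_pt (picard n) t.
Proof.
  revert t; induction n as [|n IH]; intros t; [apply pe_cont |].
  apply (continuity_pt_plus pe (fun t => RInt (delayed (picard n)) 0 (Rmax 0 t)));
    [apply pe_cont |].
  apply (continuity_pt_comp (fun t => Rmax 0 t) (fun b => RInt (delayed (picard n)) 0 b)).
  - apply continuity_pt_lipschitz with 1. intros x y. rewrite Rmult_1_l. apply Rabs_Rmax_Rmax_le.
  - apply derivable_continuous_pt. eexists.
    apply is_derive_Reals, is_derive_RInt_0, delayed_continuity, IH.
Qed.

Lemma picard_nonpos n t : t <= 0 -> picard n t = pe t.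
Proof.
  intros Ht. destruct n as [|n]; [reflexivity |]. simpl.
  rewrite Rmax_left, RInt_point by exact Ht. apply Rplus_0_r.
Qed.

Lemma picard_succ n t : 0 <= t -> picard (S n) t = pe 0 + RInt (delayed (picard n)) 0 t.
Proof. intros Ht. simpl. rewrite Rmax_right, (pe_const t) by exact Ht. reflexivity. Qed.

(* [D] bounds [|picard 1 - picard 0|] in the norm weighted by [exp (- 4 L t)]. *)
Let D := Phi + Rabs (F 0 0) / L.

Lemma D_nonneg : 0 <= D.
Proof.
  pose proof (Rle_trans _ _ _ (Rabs_pos (pe 0)) (pe_bound 0)).
  pose proof (Rabs_pos (F 0 0)). unfold D. apply Rplus_le_le_0_compat; [lra |].
  apply Rdiv_le_0_compat; lra.
Qed.

Lemma RInt_delayed_dist_le x y K t :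
  (forall u, continuity_pt x u) -> (forall u, continuity_pt y u) -> 0 <= t ->
  (forall u, Rabs (x u - y u) <= K * exp (4 * L * u)) ->
  Rabs (RInt (delayed x) 0 t - RInt (delayed y) 0 t) <= K / 2 * exp (4 * L * t).
Proof.
  intros Hx Hy Ht Hxy.
  assert (HK : 0 <= K).
  { pose proof (Hxy 0). rewrite Rmult_0_r, exp_0 in H. pose proof (Rabs_pos (x 0 - y 0)). lra. }
  rewrite <- RInt_minus_continuity by (apply delayed_continuity; auto).
  eapply Rle_trans.
  { apply (abs_RInt_le_RInt _ (fun u => 2 * L * K * exp (4 * L * u)));
      [exact Ht | | apply continuity_pt_scal_exp |].
    - intros u. apply continuity_pt_minus; apply delayed_continuity; auto.
    - intros u _. unfold delayed. eapply Rle_trans; [apply F_lip |].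
      pose proof (Hxy u). pose proof (Hxy (u - tau)).
      assert (K * exp (4 * L * (u - tau)) <= K * exp (4 * L * u))
        by (apply Rmult_le_compat_l, exp_le_mono; nra).
      replace (2 * L * K * exp (4 * L * u))
        with (L * (K * exp (4 * L * u) + K * exp (4 * L * u))) by ring.
      apply Rmult_le_compat_l; lra. }
  rewrite RInt_scal_exp by lra.
  replace (2 * L * K / (4 * L)) with (K / 2) by (field; lra).
  pose proof (exp_pos (4 * L * t)). assert (0 <= K / 2) by lra. nra.
Qed.

Lemma delayed_pe_bound u : Rabs (delayed pe u) <= 2 * L * D.
Proof.
  unfold delayed, D.
  pose proof (F_lip (pe u) (pe (u - tau)) 0 0) as H. rewrite !Rminus_0_r in H.
  pose proof (pe_bound u). pose proof (pe_bound (u - tau)).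
  pose proof (Rabs_triang_inv (F (pe u) (pe (u - tau))) (F 0 0)).
  pose proof (Rabs_pos (F 0 0)).
  replace (2 * L * (Phi + Rabs (F 0 0) / L)) with (2 * L * Phi + 2 * Rabs (F 0 0)) by (field; lra).
  nra.
Qed.

Lemma picard_step_le n t :
  Rabs (picard (S n) t - picard n t) <= D / 2 ^ n * exp (4 * L * t).
Proof.
  pose proof D_nonneg.
  revert t; induction n as [|n IH]; intros t;
    (destruct (Rle_dec t 0) as [Ht | Ht];
     [rewrite !picard_nonpos, Rminus_diag, Rabs_R0 by exact Ht;
      apply Rmult_le_pos;
        [apply Rdiv_le_0_compat; [lra | apply pow_lt; lra] | left; apply exp_pos] |]).
  - rewrite picard_succ by lra. simpl picard. rewrite (pe_const t) by lra.
    rewrite Rplus_minus_l.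
    eapply Rle_trans.
    { apply abs_RInt_le_const; [lra | apply ex_RInt_continuity, delayed_continuity, pe_cont |].
      intros u _. apply delayed_pe_bound. }
    assert (D * (1 + 4 * L * t) <= D * exp (4 * L * t))
      by (apply Rmult_le_compat_l, exp_ineq1_le; lra).
    assert (0 <= L * D * t) by (repeat apply Rmult_le_pos; lra).
    simpl pow. rewrite Rminus_0_r, Rdiv_1. lra.
  - rewrite !picard_succ by lra.
    rewrite Rminus_plus_l_l.
    eapply Rle_trans; [apply RInt_delayed_dist_le; auto using picard_continuity; lra |].
    apply Req_le. simpl pow. field. apply pow_nonzero. lra.
Qed.

Lemma picard_cauchy n m t : (n <= m)%nat ->
  Rabs (picard m t - picard n t) <= 2 * D / 2 ^ n * exp (4 * L * t).
Proof.
  intros Hnm. pose proof D_nonneg. pose proof (exp_pos (4 * L * t)).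
  assert (Hp : forall p, Rabs (picard (n + p) t - picard n t)
                 <= 2 * D * (/ 2 ^ n - / 2 ^ (n + p)) * exp (4 * L * t)).
  { induction p as [|p IH].
    - rewrite Nat.add_0_r, !Rminus_diag, Rabs_R0. lra.
    - replace (n + S p)%nat with (S (n + p)) by lia.
      replace (picard (S (n + p)) t - picard n t)
        with ((picard (S (n + p)) t - picard (n + p) t) + (picard (n + p) t - picard n t)) by ring.
      eapply Rle_trans; [apply Rabs_triang |].
      pose proof (picard_step_le (n + p) t).
      assert (0 < 2 ^ (n + p)) by (apply pow_lt; lra). assert (0 < 2 ^ n) by (apply pow_lt; lra).
      replace (2 * D * (/ 2 ^ n - / 2 ^ S (n + p)) * exp (4 * L * t))
        with (D / 2 ^ (n + p) * exp (4 * L * t)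
              + 2 * D * (/ 2 ^ n - / 2 ^ (n + p)) * exp (4 * L * t))
        by (simpl pow; field; lra).
      lra. }
  replace m with (n + (m - n))%nat by lia.
  eapply Rle_trans; [apply Hp |].
  assert (0 <= 2 * D * / 2 ^ (n + (m - n)) * exp (4 * L * t)).
  { repeat apply Rmult_le_pos; try lra. left; apply Rinv_0_lt_compat, pow_lt; lra. }
  unfold Rdiv. lra.
Qed.

Definition picard_lim (t : R) : R := real (Lim_seq (fun n => picard n t)).

Lemma picard_lim_spec t : is_lim_seq (fun n => picard n t) (picard_lim t).
Proof.
  unfold picard_lim.
  assert (Hex : ex_finite_lim_seq (fun n => picard n t)).
  { apply ex_lim_seq_cauchy_corr. intros eps.
    destruct (proj2 (is_lim_seq_spec _ _) (is_lim_seq_div_pow2 (2 * D * exp (4 * L * t))) eps)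
      as [N HN].
    assert (Hle : forall n m, (N <= n)%nat -> (n <= m)%nat -> Rabs (picard m t - picard n t) < eps).
    { intros n m Hn Hnm. eapply Rle_lt_trans; [apply picard_cauchy, Hnm |].
      specialize (HN n Hn). simpl in HN. rewrite Rminus_0_r in HN.
      eapply Rle_lt_trans; [| exact HN]. apply Req_le.
      rewrite Rabs_pos_eq; [unfold Rdiv; ring |].
      pose proof D_nonneg. pose proof (exp_pos (4 * L * t)).
      apply Rdiv_le_0_compat; [nra | apply pow_lt; lra]. }
    exists N. intros n m Hn Hm. destruct (Nat.le_ge_cases n m) as [Hnm | Hmn].
    - rewrite Rabs_minus_sym. auto.
    - auto. }
  destruct Hex as [l Hl]. rewrite (is_lim_seq_unique _ _ Hl). exact Hl.
Qed.

Lemma picard_tail n t :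
  Rabs (picard_lim t - picard n t) <= 2 * D / 2 ^ n * exp (4 * L * t).
Proof. apply (abs_lim_sub_le _ _ _ _ n (picard_lim_spec t)). intros m. apply picard_cauchy. Qed.

Lemma picard_lim_nonpos t : t <= 0 -> picard_lim t = pe t.
Proof.
  intros Ht. unfold picard_lim.
  rewrite (Lim_seq_ext _ (fun _ => pe t)) by (intros n; apply picard_nonpos, Ht).
  rewrite Lim_seq_const. reflexivity.
Qed.

(* The convergence is uniform on bounded sets. *)
Lemma picard_lim_continuity t : continuity_pt picard_lim t.
Proof.
  apply (CVU_continuity picard picard_lim t (mkposreal 1 Rlt_0_1));
    [| intros; apply picard_continuity | apply Boule_center].
  intros eps Heps.
  destruct (proj2 (is_lim_seq_spec _ _)
              (is_lim_seq_div_pow2 (2 * D * exp (4 * L * (t + 1)))) (mkposreal eps Heps)) as [N HN].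
  exists N. intros n y Hn Hy.
  unfold Boule in Hy; simpl in Hy. apply Rabs_def2 in Hy.
  specialize (HN n Hn). simpl in HN. rewrite Rminus_0_r in HN.
  eapply Rle_lt_trans; [apply picard_tail |].
  eapply Rle_lt_trans; [| exact HN].
  eapply Rle_trans; [| apply Rle_abs].
  assert (0 <= 2 * D / 2 ^ n)
    by (pose proof D_nonneg; apply Rdiv_le_0_compat; [lra | apply pow_lt; lra]).
  assert (exp (4 * L * y) <= exp (4 * L * (t + 1))) by (apply exp_le_mono; nra).
  unfold Rdiv in *. nra.
Qed.

Lemma picard_lim_integral t : 0 <= t -> picard_lim t = pe 0 + RInt (delayed picard_lim) 0 t.
Proof.
  intros Ht.
  assert (H1 : is_lim_seq (fun n => picard (S n) t) (picard_lim t))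
    by apply (is_lim_seq_incr_1 (fun n => picard n t)), picard_lim_spec.
  assert (H2 : is_lim_seq (fun n => picard (S n) t) (pe 0 + RInt (delayed picard_lim) 0 t)).
  { apply (is_lim_seq_of_pow2_bound _ _ (D * exp (4 * L * t))). intros n.
    rewrite picard_succ by exact Ht.
    rewrite Rminus_plus_l_l.
    eapply Rle_trans.
    { apply (RInt_delayed_dist_le _ _ (2 * D / 2 ^ n));
        auto using picard_continuity, picard_lim_continuity.
      intros u. rewrite Rabs_minus_sym. apply picard_tail. }
    apply Req_le. field. apply pow_nonzero. lra. }
  apply Rbar_finite_eq. rewrite <- (is_lim_seq_unique _ _ H1). exact (is_lim_seq_unique _ _ H2).
Qed.

Theorem exists_dde_solution : exists Q : R -> R,
  (forall t, continuity_pt Q t) /\ (forall t, t <= 0 -> Q t = pe t) /\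
  (forall t, 0 < t -> derivable_pt_lim Q t (F (Q t) (Q (t - tau)))).
Proof.
  exists picard_lim. split; [exact picard_lim_continuity | split; [exact picard_lim_nonpos |]].
  intros t Ht. apply is_derive_Reals.
  apply (is_derive_ext_loc (fun u => pe 0 + RInt (delayed picard_lim) 0 u)).
  { apply locally_interval with (a := Finite 0) (b := p_infty); [exact Ht | exact I |].
    intros u Hu _. symmetry. apply picard_lim_integral. simpl in Hu. lra. }
  apply is_derive_Reals.
  replace (F (picard_lim t) (picard_lim (t - tau))) with (0 + delayed picard_lim t)
    by (unfold delayed; ring).
  apply (derivable_pt_lim_plus (fun _ => pe 0)); [apply derivable_pt_lim_const |].
  apply is_derive_Reals, is_derive_RInt_0, delayed_continuity, picard_lim_continuity.
Qed.

End Picard.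

Lemma Rpower_pos x s : 0 < Rpower x s.
Proof. apply exp_pos. Qed.

Lemma hpow_nonneg x s : 0 <= hpow x s.
Proof. unfold hpow. destruct (Rle_dec x 0); [lra | left; apply Rpower_pos]. Qed.

Lemma hpow_pos_eq x s : 0 < x -> hpow x s = Rpower x s.
Proof. intros Hx. unfold hpow. destruct (Rle_dec x 0); [lra | reflexivity]. Qed.

Definition flux (f theta s x : R) : R := beta f theta s x * x.

Lemma rhs_flux kappa gamma tau theta f s x y :
  rhs kappa gamma tau theta f s x y
  = - kappa * x - flux f theta s x + amp gamma tau * flux f theta s y.
Proof. unfold rhs, flux. ring. Qed.

Lemma amp_pos gamma tau : 0 < amp gamma tau.
Proof. unfold amp. pose proof (exp_pos (- gamma * tau)). lra. Qed.

Section Hill.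

Variables f theta s : R.
Hypothesis f_pos : 0 < f.

Lemma beta_bounds x : 0 <= beta f theta s x <= f.
Proof.
  unfold beta. pose proof (hpow_nonneg x s). pose proof (Rpower_pos theta s).
  split; [apply Rdiv_le_0_compat; nra |].
  apply Rmult_le_reg_r with (Rpower theta s + hpow x s); [lra |].
  unfold Rdiv. rewrite Rmult_assoc, Rinv_l; nra.
Qed.

Lemma flux_nonpos_eq x : x <= 0 -> flux f theta s x = f * x.
Proof.
  intros Hx. unfold flux, beta, hpow. destruct (Rle_dec x 0); [| lra].
  pose proof (Rpower_pos theta s). field. lra.
Qed.

Lemma flux_nonneg x : 0 <= x -> 0 <= flux f theta s x.
Proof. intros Hx. unfold flux. pose proof (beta_bounds x). nra. Qed.

Lemma flux_le x : flux f theta s x <= f * x.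
Proof.
  destruct (Rle_dec x 0) as [Hx | Hx]; [rewrite flux_nonpos_eq; lra |].
  unfold flux. pose proof (beta_bounds x). nra.
Qed.

Lemma flux_pos_eq x : 0 < x ->
  flux f theta s x = f * Rpower theta s * x / (Rpower theta s + Rpower x s).
Proof.
  intros Hx. unfold flux, beta. rewrite hpow_pos_eq by exact Hx.
  pose proof (Rpower_pos theta s). pose proof (Rpower_pos x s). field. lra.
Qed.

Lemma is_derive_flux_pos x : 0 < x ->
  is_derive (fun x => f * Rpower theta s * x / (Rpower theta s + Rpower x s)) x
    (f * Rpower theta s * (Rpower theta s + (1 - s) * Rpower x s)
       / (Rpower theta s + Rpower x s) ^ 2).
Proof.
  intros Hx. pose proof (Rpower_pos theta s). pose proof (Rpower_pos x s).
  assert (Dp : is_derive (fun x => Rpower x s) x (s * Rpower x (s - 1)))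
    by apply is_derive_Reals, derivable_pt_lim_power, Hx.
  assert (E : x * Rpower x (s - 1) = Rpower x s).
  { rewrite <- (Rpower_1 x) at 1 by exact Hx. rewrite <- Rpower_plus. f_equal; ring. }
  auto_derive.
  - split; [eexists; exact Dp | split; [lra | exact I]].
  - replace (Derive (fun x => Rpower x s) x) with (s * Rpower x (s - 1))
      by (symmetry; apply is_derive_unique, Dp).
    rewrite <- E. field. rewrite E. lra.
Qed.

Definition flux_lip : R := f * (1 + Rabs (1 - s)).

Lemma flux_lip_ge_f : f <= flux_lip.
Proof. unfold flux_lip. pose proof (Rabs_pos (1 - s)). nra. Qed.

Lemma flux_derive_bound a p : 0 < a -> 0 < p ->
  Rabs (f * a * (a + (1 - s) * p) / (a + p) ^ 2) <= flux_lip.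
Proof.
  intros Ha Hp. unfold flux_lip.
  assert (Hnum : Rabs (a + (1 - s) * p) <= (1 + Rabs (1 - s)) * (a + p)).
  { eapply Rle_trans; [apply Rabs_triang |].
    rewrite Rabs_mult, (Rabs_pos_eq a), (Rabs_pos_eq p) by lra.
    pose proof (Rabs_pos (1 - s)). nra. }
  replace (f * a * (a + (1 - s) * p) / (a + p) ^ 2)
    with (f * (a / (a + p)) * ((a + (1 - s) * p) / (a + p))) by (field; lra).
  assert (Hq : 0 <= a / (a + p) <= 1).
  { split; [apply Rdiv_le_0_compat; lra |].
    apply Rmult_le_reg_r with (a + p); [lra |]. unfold Rdiv. rewrite Rmult_assoc, Rinv_l; lra. }
  assert (Hr : Rabs ((a + (1 - s) * p) / (a + p)) <= 1 + Rabs (1 - s)).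
  { unfold Rdiv.
    rewrite Rabs_mult, (Rabs_pos_eq (/ (a + p))) by (left; apply Rinv_0_lt_compat; lra).
    apply Rmult_le_reg_r with (a + p); [lra |]. rewrite Rmult_assoc, Rinv_l; lra. }
  rewrite Rabs_mult, Rabs_mult, (Rabs_pos_eq f), (Rabs_pos_eq (a / (a + p))) by lra.
  pose proof (Rabs_pos ((a + (1 - s) * p) / (a + p))).
  assert (f * (a / (a + p)) <= f) by nra.
  apply Rle_trans with (f * Rabs ((a + (1 - s) * p) / (a + p))); [nra |].
  apply Rmult_le_compat_l; lra.
Qed.

Lemma flux_lipschitz_le x y : y <= x ->
  Rabs (flux f theta s x - flux f theta s y) <= flux_lip * (x - y).
Proof.
  intros Hyx. pose proof flux_lip_ge_f.
  destruct (Rle_dec y 0) as [Hy | Hy].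
  - rewrite (flux_nonpos_eq y Hy).
    destruct (Rle_dec x 0) as [Hx | Hx].
    + rewrite (flux_nonpos_eq x Hx), <- Rmult_minus_distr_l, Rabs_mult, !Rabs_pos_eq; nra.
    + pose proof (flux_nonneg x). pose proof (flux_le x). apply Rabs_le. split; nra.
  - destruct (Rle_lt_or_eq_dec _ _ Hyx) as [Hlt | ->];
      [| rewrite Rminus_diag, Rabs_R0; lra].
    destruct (MVT_cor2 (fun x => f * Rpower theta s * x / (Rpower theta s + Rpower x s))
      (fun x => f * Rpower theta s * (Rpower theta s + (1 - s) * Rpower x s)
                  / (Rpower theta s + Rpower x s) ^ 2) y x Hlt) as [c [Hc Hcyx]].
    { intros c Hc. apply is_derive_Reals, is_derive_flux_pos. lra. }
    rewrite !flux_pos_eq, Hc, Rabs_mult, (Rabs_pos_eq (x - y)) by lra.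
    apply Rmult_le_compat_r; [lra |]. apply flux_derive_bound; apply Rpower_pos.
Qed.

Lemma flux_lipschitz x y :
  Rabs (flux f theta s x - flux f theta s y) <= flux_lip * Rabs (x - y).
Proof.
  destruct (Rle_dec y x) as [Hyx | Hxy].
  - rewrite (Rabs_pos_eq (x - y)) by lra. apply flux_lipschitz_le, Hyx.
  - rewrite Rabs_minus_sym, (Rabs_minus_sym x), (Rabs_pos_eq (y - x)) by lra.
    apply flux_lipschitz_le. lra.
Qed.

(* Since [beta x] decays like [x ^ (- s)], the production [A * flux x] eventually
   falls below the loss [kappa * x]. *)
Lemma exists_invariant_level kappa A Phi : 0 < s -> 0 < kappa -> 0 < A ->
  exists M, Phi <= M /\ forall x, 0 <= x <= M -> A * flux f theta s x <= kappa * M.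
Proof.
  intros Hs Hk HA. pose proof (Rpower_pos theta s) as Ha.
  set (K := A * f * Rpower theta s / kappa).
  assert (HK : 0 < K)
    by (unfold K; apply Rdiv_lt_0_compat; [apply Rmult_lt_0_compat; [nra |] |]; lra).
  set (x1 := Rpower K (1 / s)).
  assert (Hx1 : Rpower x1 s = K).
  { unfold x1. rewrite Rpower_mult. replace (1 / s * s) with 1 by (field; lra).
    apply Rpower_1, HK. }
  exists (Rmax Phi (A * f * x1 / kappa)). split; [apply Rmax_l |].
  set (M := Rmax Phi (A * f * x1 / kappa)). intros x [Hx0 HxM].
  assert (HM : A * f * x1 <= kappa * M).
  { replace (A * f * x1) with (kappa * (A * f * x1 / kappa)) by (field; lra).
    apply Rmult_le_compat_l; [lra | apply Rmax_r]. }
  destruct (Rle_dec x x1) as [Hsmall | Hlarge].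
  - pose proof (flux_le x).
    assert (A * flux f theta s x <= A * (f * x)) by (apply Rmult_le_compat_l; lra).
    assert (A * (f * x) <= A * f * x1) by (rewrite <- Rmult_assoc; apply Rmult_le_compat_l; nra).
    lra.
  - assert (HxK : K <= Rpower x s)
      by (rewrite <- Hx1; apply Rle_Rpower_l; [lra | split; [apply Rpower_pos | lra]]).
    assert (Hx : 0 < x) by (pose proof (Rpower_pos K (1 / s)); fold x1 in H; lra).
    assert (Hbeta : beta f theta s x <= f * Rpower theta s / K).
    { unfold beta. rewrite hpow_pos_eq by exact Hx. unfold Rdiv.
      apply Rmult_le_compat_l; [nra |]. apply Rinv_le_contravar; [exact HK | lra]. }
    assert (HAK : A * (f * Rpower theta s / K) = kappa) by (unfold K; field; repeat split; lra).
    assert (A * beta f theta s x <= kappa)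
      by (rewrite <- HAK; apply Rmult_le_compat_l; lra).
    unfold flux. pose proof (beta_bounds x). nra.
Qed.

End Hill.

Lemma rhs_lipschitz kappa gamma tau theta f s : 0 < kappa -> 0 < f ->
  exists L, 0 < L /\ lipschitz2 (rhs kappa gamma tau theta f s) L.
Proof.
  intros Hk Hf. pose proof (amp_pos gamma tau) as HA. pose proof (flux_lip_ge_f f s Hf).
  exists (kappa + flux_lip f s + amp gamma tau * flux_lip f s). split; [nra |].
  intros x y x' y'. rewrite !rhs_flux.
  pose proof (flux_lipschitz f theta s Hf x x') as Hx.
  pose proof (flux_lipschitz f theta s Hf y y') as Hy.
  replace (- kappa * x - flux f theta s x + amp gamma tau * flux f theta s y
           - (- kappa * x' - flux f theta s x' + amp gamma tau * flux f theta s y'))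
    with (- kappa * (x - x') - (flux f theta s x - flux f theta s x')
          + amp gamma tau * (flux f theta s y - flux f theta s y')) by ring.
  eapply Rle_trans; [apply Rabs_triang |].
  eapply Rle_trans; [apply Rplus_le_compat_r, Rabs_triang |].
  rewrite Rabs_Ropp, !Rabs_mult, Rabs_Ropp, (Rabs_pos_eq kappa), (Rabs_pos_eq (amp gamma tau))
    by lra.
  pose proof (Rabs_pos (x - x')). pose proof (Rabs_pos (y - y')).
  assert (amp gamma tau * Rabs (flux f theta s y - flux f theta s y')
          <= amp gamma tau * (flux_lip f s * Rabs (y - y'))) by (apply Rmult_le_compat_l; lra).
  assert (0 <= kappa * Rabs (y - y')) by (apply Rmult_le_pos; lra).
  assert (0 <= flux_lip f s * Rabs (y - y')) by (apply Rmult_le_pos; lra).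
  assert (0 <= amp gamma tau * flux_lip f s * Rabs (x - x'))
    by (apply Rmult_le_pos; [apply Rmult_le_pos |]; lra).
  lra.
Qed.

Lemma rhs_solution_nonneg kappa gamma tau theta f s Q : 0 < tau -> 0 < f ->
  dde_solution (rhs kappa gamma tau theta f s) tau Q ->
  (forall t, - tau <= t <= 0 -> 0 <= Q t) -> forall t, - tau <= t -> 0 <= Q t.
Proof.
  intros Htau Hf [HC HD] H0.
  apply (nonneg_by_steps Q _ (kappa + f) tau Htau HC HD); [| exact H0].
  intros t _ Hdel. rewrite rhs_flux.
  pose proof (flux_le f theta s Hf (Q t)).
  pose proof (flux_nonneg f theta s Hf _ Hdel). pose proof (amp_pos gamma tau).
  assert (0 <= amp gamma tau * flux f theta s (Q (t - tau))) by (apply Rmult_le_pos; lra).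
  lra.
Qed.

Lemma rhs_solution_le kappa gamma tau theta f s Q M : 0 < tau -> 0 < f ->
  (forall x, 0 <= x <= M -> amp gamma tau * flux f theta s x <= kappa * M) ->
  dde_solution (rhs kappa gamma tau theta f s) tau Q ->
  (forall t, - tau <= t -> 0 <= Q t) ->
  (forall t, - tau <= t <= 0 -> Q t <= M) -> forall t, - tau <= t -> Q t <= M.
Proof.
  intros Htau Hf HM [HC HD] Hnn H0.
  enough (H : forall t, - tau <= t -> 0 <= M - Q t) by (intros t Ht; specialize (H t Ht); lra).
  apply (nonneg_by_steps (fun t => M - Q t)
           (fun t => 0 - rhs kappa gamma tau theta f s (Q t) (Q (t - tau))) kappa tau Htau).
  - intros t Ht. apply continuity_pt_minus; [apply continuity_pt_const; intros ??; auto | auto].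
  - intros t Ht.
    apply (derivable_pt_lim_minus (fun _ => M) Q); [apply derivable_pt_lim_const | auto].
  - intros t Ht Hdel. cbv beta in Hdel |- *. rewrite rhs_flux.
    assert (Hdel' : 0 <= Q (t - tau) <= M) by (split; [apply Hnn | ]; lra).
    pose proof (HM _ Hdel').
    pose proof (flux_nonneg f theta s Hf (Q t)) as Hflux.
    assert (0 <= flux f theta s (Q t)) by (apply Hflux, Hnn; lra).
    lra.
  - intros t Ht. specialize (H0 t Ht). lra.
Qed.

Lemma continuity_pt_of_cont_within D (g : R -> R) t :
  locally t D -> cont_within D g t -> continuity_pt g t.
Proof.
  intros HD Hg. apply continuity_pt_filterlim. intros P HP.
  specialize (Hg P HP). unfold filtermap, within in *.
  generalize (filter_and _ _ Hg HD). apply filter_imp. intros x [Hx HDx]. exact (Hx HDx).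
Qed.

Lemma cont_within_of_continuity_pt D (g : R -> R) t : continuity_pt g t -> cont_within D g t.
Proof.
  intros Hg. apply (filterlim_filter_le_1 g (filter_le_within D)).
  apply continuity_pt_filterlim, Hg.
Qed.

Lemma is_solution_dde_solution kappa gamma tau theta f s phi Q :
  is_solution kappa gamma tau theta f s phi Q -> dde_solution (rhs kappa gamma tau theta f s) tau Q.
Proof.
  intros [HC [_ HD]]. split; [| exact HD].
  intros t Ht. apply (continuity_pt_of_cont_within (fun x => - tau <= x)); [| apply HC; lra].
  apply locally_interval with (a := Finite (- tau)) (b := p_infty); [exact Ht | exact I |].
  intros y Hy _. simpl in Hy. lra.
Qed.

Definition clamp (tau t : R) : R := Rmax (- tau) (Rmin t 0).

Lemma clamp_range tau t : 0 <= tau -> - tau <= clamp tau t <= 0.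
Proof. intros Htau. unfold clamp, Rmax, Rmin. repeat destruct Rle_dec; lra. Qed.

Lemma clamp_id tau t : - tau <= t <= 0 -> clamp tau t = t.
Proof. intros Ht. unfold clamp, Rmax, Rmin. repeat destruct Rle_dec; lra. Qed.

Lemma continuity_pt_clamp tau t : continuity_pt (clamp tau) t.
Proof.
  apply continuity_pt_lipschitz with 1. intros x y. rewrite Rmult_1_l.
  eapply Rle_trans; [apply Rabs_Rmax_Rmax_le | apply Rabs_Rmin_Rmin_le].
Qed.

Lemma history_extension tau (phi : R -> R) : 0 <= tau ->
  (forall t, - tau <= t <= 0 -> cont_within (fun x => - tau <= x <= 0) phi t) ->
  exists (pe : R -> R) (Phi : R),
    (forall t, continuity_pt pe t) /\ (forall t, Rabs (pe t) <= Phi) /\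
    (forall t, 0 <= t -> pe t = pe 0) /\ (forall t, - tau <= t <= 0 -> pe t = phi t).
Proof.
  intros Htau Hphi.
  assert (Hcont : forall t, continuity_pt (fun t => phi (clamp tau t)) t).
  { intros t. apply continuity_pt_filterlim.
    apply (filterlim_comp _ _ _ (clamp tau) phi _
             (within (fun x => - tau <= x <= 0) (locally (clamp tau t))));
      [| apply Hphi, clamp_range, Htau].
    intros P HP.
    generalize (proj1 (continuity_pt_filterlim _ _) (continuity_pt_clamp tau t) _ HP).
    unfold filtermap. apply filter_imp. intros x Hx. apply Hx, clamp_range, Htau. }
  destruct (continuity_ab_maj (fun t => Rabs (phi (clamp tau t))) (- tau) 0) as [tm [Htm _]];
    [lra | intros c _; apply (continuity_pt_comp _ Rabs); [apply Hcont | apply Rcontinuity_abs] |].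
  exists (fun t => phi (clamp tau t)), (Rabs (phi (clamp tau tm))).
  split; [exact Hcont | split; [| split]].
  - intros t. rewrite <- (clamp_id tau (clamp tau t)) by (apply clamp_range, Htau).
    apply Htm, clamp_range, Htau.
  - intros t Ht. unfold clamp. rewrite !Rmin_right by lra. reflexivity.
  - intros t Ht. rewrite clamp_id by exact Ht. reflexivity.
Qed.

Theorem theorem1 (kappa gamma tau theta f s : R) (phi : R -> R) :
  0 < kappa -> 0 < gamma -> 0 < tau -> 0 < theta -> 0 < f -> 0 < s ->
  (forall t, - tau <= t <= 0 -> cont_within (fun x => - tau <= x <= 0) phi t) ->
  (forall t, - tau <= t <= 0 -> 0 <= phi t) ->
  exists Q : R -> R,
    is_solution kappa gamma tau theta f s phi Q /\
    (forall Q' : R -> R, is_solution kappa gamma tau theta f s phi Q' ->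
       forall t, - tau <= t -> Q' t = Q t) /\
    (exists M : R, forall t, 0 <= t -> 0 <= Q t <= M).
Proof.
  intros Hk _ Htau _ Hf Hs Hphi Hphi0.
  destruct (history_extension tau phi (Rlt_le _ _ Htau) Hphi)
    as (pe & Phi & Hpe_cont & Hpe_bound & Hpe_const & Hpe_phi).
  destruct (rhs_lipschitz kappa gamma tau theta f s Hk Hf) as (L & HL & HF).
  destruct (exists_dde_solution _ L tau Phi pe HL (Rlt_le _ _ Htau) HF Hpe_cont Hpe_bound Hpe_const)
    as (Q & HQc & HQpe & HQd).
  assert (HQ : dde_solution (rhs kappa gamma tau theta f s) tau Q) by (split; auto).
  assert (HQ0 : forall t, - tau <= t <= 0 -> Q t = phi t)
    by (intros t Ht; rewrite HQpe, Hpe_phi by lra; reflexivity).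
  assert (Hnn : forall t, - tau <= t -> 0 <= Q t).
  { apply (rhs_solution_nonneg kappa gamma tau theta f s); auto. intros t Ht. rewrite HQ0; auto. }
  destruct (exists_invariant_level f theta s Hf kappa (amp gamma tau) Phi Hs Hk (amp_pos gamma tau))
    as [M [HPhiM HM]].
  exists Q. split; [| split].
  - split; [intros t _; apply cont_within_of_continuity_pt, HQc | split; assumption].
  - intros Q' HQ' t.
    apply (dde_solution_unique _ L tau Q' Q Htau HF);
      [eapply is_solution_dde_solution, HQ' | exact HQ |].
    intros u Hu. destruct HQ' as [_ [HQ'0 _]]. rewrite HQ'0, HQ0 by exact Hu. reflexivity.
  - exists M. intros t Ht. split; [apply Hnn; lra |].
    apply (rhs_solution_le kappa gamma tau theta f s Q M); auto; [| lra].
    intros u Hu. rewrite HQpe by lra.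
    pose proof (Hpe_bound u). pose proof (Rle_abs (pe u)). lra.
Qed.
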